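(* Let $d\ge1$, $0<c\le\infty$, $X=(0,c)$, $X_{\mathrm{SYM}}=(-c,0)\cup(0,c)$, $\mathbb{X}=(X_{\mathrm{SYM}})^d$. For $i=1,\dots,d$ let $w_i\in C^2(X)$ be strictly positive, $p_i\in C^2(X)$ real-valued and nonvanishing, $q_i\in C^1(X)$ real-valued, $a_i\ge0$ constants, $A=\sum_ia_i$, $\mu_i(dx)=w_i(x)dx$ on $X$, $\delta_i=p_i\frac{d}{dx}+q_i$, $\delta_i^*=-p_i\frac{d}{dx}+q_i-p_i\frac{w_i'}{w_i}-p_i'$, $L_i=a_i+\delta_i^*\delta_i$. Assume for each $i$ there is an orthonormal basis $\{\varphi^{(i)}_k:k\in\mathbb{N}\}$ of $L^2(X,\mu_i)$ with $\varphi^{(i)}_k\in C^\infty(X)$, $L_i\varphi^{(i)}_k=\lambda^{(i)}_k\varphi^{(i)}_k$, $\lambda^{(i)}_0<\lambda^{(i)}_1<\dots\to\infty$, $\delta_i\varphi^{(i)}_k\in L^2(X,\mu_i)$ and $\langle\delta_i\varphi^{(i)}_k,\delta_i\varphi^{(i)}_m\rangle_{\mu_i}=\langle\delta_i^*\delta_i\varphi^{(i)}_k,\varphi^{(i)}_m\rangle_{\mu_i}$ for all $k,m$; assume moreover $a_i=\lambda^{(i)}_0$ for every $i$. Extend $w_i,p_i,\varphi^{(i)}_k$ evenly and $q_i$ oddly to $X_{\mathrm{SYM}}$ (and $\delta_i$ accordingly), and let $\mu(dx)=w_1(x_1)\cdots w_d(x_d)dx$ on $\mathbb{X}$. Define $$\Phi^{(i)}_{n}=\tfrac1{\sqrt2}\varphi^{(i)}_{n/2}\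 (n\text{ even}),\qquad \Phi^{(i)}_{n}=-\tfrac1{\sqrt2}\big(\lambda^{(i)}_{(n+1)/2}-a_i\big)^{-1/2}\delta_i\varphi^{(i)}_{(n+1)/2}\ (n\text{ odd}),$$ $\Phi_n=\Phi^{(1)}_{n_1}\otimes\cdots\otimes\Phi^{(d)}_{n_d}$ for $n\in\mathbb{N}^d$, and let $D_j$, $\mathbb{L}$ be $$D_jf(x)=p_j(x_j)\partial_{x_j}f(x)+q_j(x_j)\tfrac{f(x)+f(\sigma_jx)}{2}+\Big[p_j(x_j)\tfrac{w_j'(x_j)}{w_j(x_j)}+p_j'(x_j)-q_j(x_j)\Big]\tfrac{f(x)-f(\sigma_jx)}{2},\qquad \mathbb{L}=A-\sum_{i=1}^dD_i^2,$$ with $\sigma_j$ the reflection changing the sign of the $j$th coordinate. Then for all $n\in\mathbb{N}^d$, $$\mathbb{L}\Phi_n=\Big(\lambda^{(1)}_{\lfloor\frac{n_1+1}2\rfloor}+\dots+\lambda^{(d)}_{\lfloor\frac{n_d+1}2\rfloor}\Big)\Phi_n.$$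
   Context: $\mathbb{N}=\{0,1,2,\dots\}$; $\lfloor\cdot\rfloor$ is the floor function. *)

From HB Require Import structures.
From mathcomp Require Import all_boot all_order all_algebra.
From mathcomp Require Import all_classical all_reals all_analysis.
Set Implicit Arguments. Unset Strict Implicit. Unset Printing Implicit Defensive.
Import Order.TTheory GRing.Theory Num.Theory.
Import numFieldNormedType.Exports.
Local Open Scope classical_set_scope.
Local Open Scope ring_scope.

Section Defs.
Variable R : realType.

Definition Xint (c : \bar R) : set R := [set x | 0 < x /\ (x%:E < c)%E].
Definition Xsym (c : \bar R) : set R := [set x | x != 0 /\ (`|x|%:E < c)%E].
Definition Xbold (d : nat) (c : \bar R) : set ('I_d -> R) :=
  [set x | forall i, Xsym c (x i)].

Definition Ck_on (k : nat) (U : set R) (f : R -> R) : Prop :=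
  (forall n, (n < k)%N -> forall x, U x -> derivable (derive1n n f) x 1) /\
  (forall x, U x -> {for x, continuous (derive1n k f)}).
Definition Cinf_on (U : set R) (f : R -> R) : Prop := forall k, Ck_on k U f.

Definition L2w (U : set R) (w f : R -> R) : Prop :=
  measurable_fun U f /\
  (\int[lebesgue_measure]_(x in U) ((f x) ^+ 2 * w x)%:E < +oo)%E.

Definition ipw (U : set R) (w f g : R -> R) : R :=
  \int[lebesgue_measure]_(x in U) (f x * g x * w x).

Definition ONB (U : set R) (w : R -> R) (phi : nat -> R -> R) : Prop :=
  (forall k, L2w U w (phi k)) /\
  (forall k m, ipw U w (phi k) (phi m) = (k == m)%:R) /\
  (forall f, L2w U w f -> (forall k, ipw U w f (phi k) = 0) ->
     {ae lebesgue_measure, forall x, U x -> f x = 0}).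

Definition delta (p q f : R -> R) : R -> R :=
  fun x => p x * derive1 f x + q x * f x.
Definition deltaS (w p q f : R -> R) : R -> R :=
  fun x => - (p x * derive1 f x) + q x * f x - p x * (derive1 w x / w x) * f x
           - derive1 p x * f x.

Definition even_ext (f : R -> R) : R -> R := fun x => f `|x|.
Definition odd_ext (f : R -> R) : R -> R := fun x => Num.sg x * f `|x|.

Variable d : nat.

Definition Phi1 (w p q : R -> R) (a : R) (lam : nat -> R)
  (phi : nat -> R -> R) (n : nat) : R -> R :=
  if odd n then
    fun x => - (Num.sqrt 2)^-1 * (Num.sqrt (lam n.+1./2 - a))^-1 *
             delta (even_ext p) (odd_ext q) (even_ext (phi n.+1./2)) x
  else fun x => (Num.sqrt 2)^-1 * even_ext (phi n./2) x.

Definition PhiN (w p q : 'I_d -> R -> R) (a : 'I_d -> R)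
  (lam : 'I_d -> nat -> R) (phi : 'I_d -> nat -> R -> R) (n : 'I_d -> nat)
  : ('I_d -> R) -> R :=
  fun x => \prod_(i < d) Phi1 (w i) (p i) (q i) (a i) (lam i) (phi i) (n i) (x i).

Definition sigma (j : 'I_d) (x : 'I_d -> R) : 'I_d -> R :=
  fun i => if i == j then - x i else x i.
Definition partial (j : 'I_d) (f : ('I_d -> R) -> R) (x : 'I_d -> R) : R :=
  derive1 (fun t => f (fun i => if i == j then t else x i)) (x j).

Definition Dop (w p q : 'I_d -> R -> R) (j : 'I_d) (f : ('I_d -> R) -> R)
  : ('I_d -> R) -> R :=
  fun x =>
    let wj := even_ext (w j) in let pj := even_ext (p j) in
    let qj := odd_ext (q j) in
    pj (x j) * partial j f x + qj (x j) * ((f x + f (sigma j x)) / 2)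
    + (pj (x j) * (derive1 wj (x j) / wj (x j)) + derive1 pj (x j) - qj (x j))
      * ((f x - f (sigma j x)) / 2).

Definition Lbold (w p q : 'I_d -> R -> R) (A : R) (f : ('I_d -> R) -> R)
  : ('I_d -> R) -> R :=
  fun x => A * f x - \sum_(i < d) Dop w p q i (Dop w p q i f) x.

End Defs.

From HB Require Import structures.
From mathcomp Require Import all_boot all_order all_algebra.
From mathcomp Require Import all_classical all_reals all_analysis.
From mathcomp Require Import ring.
Import Order.TTheory GRing.Theory Num.Theory.
Import numFieldNormedType.Exports.
Local Open Scope classical_set_scope.
Local Open Scope ring_scope.

(* On the symmetric set X_SYM the operator D_j only sees the j-th tensor factor,
   where it exchanges even and odd extensions: it sends the even extension of an
   eigenfunction phi of L_j to the odd extension of delta_j phi, and the odd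
   extension of delta_j phi to -(lambda - a_j) times the even extension of phi,
   which is the eigenvalue equation a_j + delta_j^* delta_j = lambda.  Hence on
   every combination al * even(phi) + be * odd(delta_j phi), in particular on
   Phi^(j)_n with phi = phi^(j)_{(n+1)/2}, D_j^2 is multiplication by
   -(lambda - a_j); summing over j gives
   LL Phi_n = (A + sum_j (lambda^(j) - a_j)) Phi_n. *)

Section SymmetricExtensions.
Context {R : realType}.
Implicit Types (f : R -> R) (t df : R).

Lemma is_derive_even_ext f t df : t != 0 -> is_derive `|t| 1 f df ->
  is_derive t 1 (even_ext f) (Num.sg t * df).
Proof.
case: (ltgtP t 0) => // [tlt|tgt] _ fdf.
- rewrite ltr0_norm // in fdf; rewrite ltr0_sg // mulN1r.
  apply: (@near_eq_is_derive _ _ _ (f \o -%R)).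
    by near=> u; rewrite /even_ext /= ltr0_norm //; near: u; exact: lt_nbhsl.
  by apply: is_derive_eq; rewrite mulrN1.
- rewrite gtr0_norm // in fdf; rewrite gtr0_sg // mul1r.
  apply: near_eq_is_derive fdf.
  by near=> u; rewrite /even_ext gtr0_norm //; near: u; exact: lt_nbhsr.
Unshelve. all: by end_near.
Qed.

Lemma is_derive_odd_ext f t df : t != 0 -> is_derive `|t| 1 f df ->
  is_derive t 1 (odd_ext f) df.
Proof.
case: (ltgtP t 0) => // [tlt|tgt] _ fdf.
- rewrite ltr0_norm // in fdf.
  apply: (@near_eq_is_derive _ _ _ (- (f \o -%R))).
    near=> u; have u0 : u < 0 by near: u; exact: lt_nbhsl.
    by rewrite /odd_ext /= ltr0_norm // ltr0_sg // mulN1r.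
  by apply: is_derive_eq; rewrite mulrN1 opprK.
- rewrite gtr0_norm // in fdf; apply: near_eq_is_derive fdf.
  near=> u; have u0 : 0 < u by near: u; exact: lt_nbhsr.
  by rewrite /odd_ext gtr0_norm // gtr0_sg // mul1r.
Unshelve. all: by end_near.
Qed.

End SymmetricExtensions.

Arguments is_derive_even_ext {R f t df}.
Arguments is_derive_odd_ext {R f t df}.

Section Xsym.
Context {R : realType} {c : \bar R}.

Lemma Xsym_norm t : Xsym c t -> Xint c `|t|.
Proof. by case=> t0 tc; split; rewrite ?normr_gt0. Qed.

Lemma XsymN t : Xsym c t -> Xsym c (- t).
Proof. by case=> t0 tc; split; rewrite ?oppr_eq0 ?normrN. Qed.

Lemma Xsym_nbhs t : Xsym c t -> \forall u \near t, Xsym c u.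
Proof.
case=> t0 tc.
have u0 : \forall u \near t, u != 0.
  case: (ltgtP t 0) t0 => // [tlt|tgt] _.
    by near=> u; apply: ltr0_neq0; near: u; exact: lt_nbhsl.
  by near=> u; apply: lt0r_neq0; near: u; exact: lt_nbhsr.
case: c tc => [r| |] //= tc; last by near=> u; split; [near: u|exact: ltry].
rewrite lte_fin in tc.
have ur : \forall u \near t, u < r.
  by apply: lt_nbhsl; exact: le_lt_trans (ler_norm _) tc.
have Nur : \forall u \near t, - u < r.
  by apply: Nlt_nbhsl; rewrite -normrN in tc; exact: le_lt_trans (ler_norm _) tc.
near=> u; split; first by near: u.
by rewrite lte_fin ltr_norml -ltrNl; apply/andP; split; [near: u|near: u].
Unshelve. all: by end_near.
Qed.

End Xsym.

Arguments Xsym_norm {R c t}.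
Arguments XsymN {R c t}.
Arguments Xsym_nbhs {R c t}.

Section OneDimensional.
Variables (R : realType) (c : \bar R) (w p q : R -> R).

Definition Dop1 (g : R -> R) (t : R) : R :=
  let wj := even_ext w in let pj := even_ext p in let qj := odd_ext q in
  pj t * derive1 g t + qj t * ((g t + g (- t)) / 2)
  + (pj t * (derive1 wj t / wj t) + derive1 pj t - qj t) * ((g t - g (- t)) / 2).

Section Locality.
Variables (g1 g2 : R -> R) (t : R).
Hypotheses (g12 : forall u, Xsym c u -> g1 u = g2 u) (tX : Xsym c t).

Let g12_near : \forall u \near t, g1 u = g2 u.
Proof.
by near=> u; apply: g12; near: u; exact: Xsym_nbhs.
Unshelve. all: by end_near.
Qed.

Lemma derivable_Xsym_eq : derivable g1 t 1 -> derivable g2 t 1.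
Proof. exact: near_eq_derivable g12_near. Qed.

Lemma Dop1_Xsym_eq : Dop1 g1 t = Dop1 g2 t.
Proof.
rewrite /Dop1 !derive1E (near_eq_derive _ g12_near).
by rewrite !g12 //; exact: XsymN.
Qed.

End Locality.

Lemma derive1_even_ext (f : R -> R) (t : R) : t != 0 -> derivable f `|t| 1 ->
  derive1 (even_ext f) t = Num.sg t * derive1 f `|t|.
Proof.
move=> t0 /derivableP fdf; have := is_derive_even_ext t0 fdf.
by rewrite !derive1E => ?; exact: derive_val.
Qed.

Hypotheses (dw : forall x, Xint c x -> derivable w x 1)
  (dp : forall x, Xint c x -> derivable p x 1)
  (dq : forall x, Xint c x -> derivable q x 1)
  (w_neq0 : forall x, Xint c x -> w x != 0).

Variables (phi : R -> R) (a lam : R).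
Hypotheses (dphi : forall x, Xint c x -> derivable phi x 1)
  (dphi' : forall x, Xint c x -> derivable (derive1 phi) x 1)
  (eig : forall x, Xint c x ->
     a * phi x + deltaS w p q (delta p q phi) x = lam * phi x).

Lemma derivable_delta x : Xint c x -> derivable (delta p q phi) x 1.
Proof.
move=> xX; have -> : delta p q phi = p * derive1 phi + q * phi by [].
by apply: derivableD; apply: derivableM; auto.
Qed.

Lemma delta_even_ext t : Xsym c t ->
  delta (even_ext p) (odd_ext q) (even_ext phi) t = odd_ext (delta p q phi) t.
Proof.
move=> tX; have [t0 _] := tX.
rewrite /delta derive1_even_ext //; last exact/dphi/Xsym_norm.
by rewrite /even_ext /odd_ext; ring.
Qed.

Definition ladder (al be : R) : R -> R :=
  al \*: even_ext phi + be \*: odd_ext (delta p q phi).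

Lemma ladderE al be t :
  ladder al be t = al * phi `|t| + be * (Num.sg t * delta p q phi `|t|).
Proof. by []. Qed.

Lemma is_derive_ladder al be t : Xsym c t ->
  is_derive t 1 (ladder al be)
    (al * (Num.sg t * derive1 phi `|t|) + be * derive1 (delta p q phi) `|t|).
Proof.
move=> tX; have [t0 _] := tX; have tX' := Xsym_norm tX.
have /derivableP dphit := dphi _ tX'; rewrite -derive1E in dphit.
have /derivableP ddeltat := derivable_delta _ tX'; rewrite -derive1E in ddeltat.
have := is_derive_even_ext t0 dphit; have := is_derive_odd_ext t0 ddeltat.
by move=> ? ?; apply: is_derive_eq.
Qed.

Lemma derivable_ladder al be t : Xsym c t -> derivable (ladder al be) t 1.
Proof. by move=> tX; have := is_derive_ladder al be _ tX => ?; exact: ex_derive. Qed.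

Lemma Dop1_ladder al be t : Xsym c t ->
  Dop1 (ladder al be) t = ladder (- be * (lam - a)) al t.
Proof.
move=> tX; have [t0 _] := tX; have tX' := Xsym_norm tX.
have dwt := dw _ tX'; have dpt := dp _ tX'; have wt := w_neq0 _ tX'.
have := is_derive_ladder al be _ tX => ?.
rewrite /Dop1 derive1E derive_val !derive1_even_ext // !ladderE normrN sgrN.
have E := eig _ tX'; rewrite /deltaS in E.
have deltaE : delta p q phi `|t| = p `|t| * derive1 phi `|t| + q `|t| * phi `|t| by [].
rewrite (_ : - be * (lam - a) * phi `|t|
             = - be * (lam * phi `|t|) + be * a * phi `|t|); last by ring.
rewrite -E /even_ext /odd_ext !deltaE.
have [->|->] : Num.sg t = 1 \/ Num.sg t = -1.
  case: (ltgtP t 0) t0 => // [tlt|tgt] _.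
    by right; rewrite ltr0_sg.
  by left; rewrite gtr0_sg.
all: by field.
Qed.

Section LadderForm.
Variables (g : R -> R) (al be : R).
Hypothesis g_ladder : forall u, Xsym c u -> g u = ladder al be u.

Lemma derivable_ladder_form t : Xsym c t -> derivable g t 1.
Proof.
move=> tX; have lg u : Xsym c u -> ladder al be u = g u by move/g_ladder.
exact: derivable_Xsym_eq _ _ _ lg tX (derivable_ladder _ _ _ tX).
Qed.

Lemma Dop1_ladder_form t : Xsym c t -> Dop1 g t = ladder (- be * (lam - a)) al t.
Proof. by move=> tX; rewrite (Dop1_Xsym_eq _ _ _ g_ladder tX) Dop1_ladder. Qed.

Lemma derivable_Dop1_ladder_form t : Xsym c t -> derivable (Dop1 g) t 1.
Proof.
move=> tX; have lDg u : Xsym c u -> ladder (- be * (lam - a)) al u = Dop1 g u.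
  by move/Dop1_ladder_form.
exact: derivable_Xsym_eq _ _ _ lDg tX (derivable_ladder _ _ _ tX).
Qed.

Lemma Dop1_sqr_ladder_form t : Xsym c t -> Dop1 (Dop1 g) t = - (lam - a) * g t.
Proof.
move=> tX; rewrite (Dop1_Xsym_eq _ _ _ Dop1_ladder_form tX) Dop1_ladder //.
by rewrite g_ladder // !ladderE; ring.
Qed.

End LadderForm.

End OneDimensional.

Arguments Dop1 {R}.
Arguments ladder {R}.
Arguments ladderE {R p q phi}.
Arguments delta_even_ext {R c p q phi} dphi {t}.
Arguments derivable_ladder_form {R c p q} dp dq {phi} dphi dphi' {g al be} g_ladder {t}.
Arguments derivable_Dop1_ladder_form {R c w p q} dw dp dq w_neq0 {phi a lam}
  dphi dphi' eig {g al be} g_ladder {t}.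
Arguments Dop1_sqr_ladder_form {R c w p q} dw dp dq w_neq0 {phi a lam}
  dphi dphi' eig {g al be} g_ladder {t}.

Lemma Phi1_ladder (R : realType) (c : \bar R) (w p q : R -> R) (a : R)
    (lam : nat -> R) (phi : nat -> R -> R) (n : nat) :
  (forall x, Xint c x -> derivable (phi n.+1./2) x 1) ->
  exists al be, forall t, Xsym c t ->
    Phi1 w p q a lam phi n t = ladder p q (phi n.+1./2) al be t.
Proof.
move=> dphi; rewrite /Phi1; case: ifP => n_odd.
- exists 0, (- (Num.sqrt 2)^-1 * (Num.sqrt (lam n.+1./2 - a))^-1) => t tX.
  by rewrite ladderE (delta_even_ext dphi tX) mul0r add0r.
- have -> : n.+1./2 = n./2 by rewrite -uphalfE uphalf_half n_odd.
  by exists (Num.sqrt 2)^-1, 0 => t tX; rewrite ladderE mul0r addr0.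
Qed.

Arguments Phi1_ladder {R c} w p q a lam {phi} n.

Section Tensor.
Context {R : realType} {d : nat} (c : \bar R) (w p q : 'I_d -> R -> R) (j : 'I_d).
Variable H : ('I_d -> R) -> R.
Hypothesis H_indep : forall y u, H (fun i => if i == j then u else y i) = H y.

Lemma H_sigma y : H (sigma j y) = H y.
Proof.
rewrite -(H_indep y (- y j)); congr H; apply/funext => i.
by rewrite /sigma; case: eqP => // ->.
Qed.

Lemma Dop_tensor (F : ('I_d -> R) -> R) (g : R -> R) x :
  (forall z, Xsym c (z j) -> F z = H z * g (z j)) ->
  Xsym c (x j) -> derivable g (x j) 1 ->
  Dop w p q j F x = H x * Dop1 (w j) (p j) (q j) g (x j).
Proof.
move=> FE xX dg.
have dF : partial j F x = H x * derive1 g (x j).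
  have FE_near : \forall u \near x j,
      H x * g u = F (fun i => if i == j then u else x i).
    near=> u; rewrite FE /= eqxx ?H_indep //; near: u; exact: Xsym_nbhs.
  by rewrite /partial derive1E -(near_eq_derive _ FE_near) -derive1E derive1Ml.
have sX : Xsym c (sigma j x j) by rewrite /sigma eqxx; exact: XsymN.
rewrite /Dop /Dop1 dF (FE x xX) (FE _ sX) H_sigma /sigma eqxx.
by ring.
Unshelve. all: by end_near.
Qed.

Lemma Dop_sqr_tensor (F : ('I_d -> R) -> R) (g : R -> R) x :
  (forall z, Xsym c (z j) -> F z = H z * g (z j)) ->
  (forall u, Xsym c u -> derivable g u 1) ->
  Xsym c (x j) -> derivable (Dop1 (w j) (p j) (q j) g) (x j) 1 ->
  Dop w p q j (Dop w p q j F) x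
  = H x * Dop1 (w j) (p j) (q j) (Dop1 (w j) (p j) (q j) g) (x j).
Proof.
move=> FE dg xX dDg; apply: Dop_tensor => // z zX.
exact: Dop_tensor FE zX (dg _ zX).
Qed.

End Tensor.

Arguments Dop_sqr_tensor {R d c} w p q {j H} H_indep {F g x}.

Theorem mainTheorem3 (R : realType) (d : nat) (c : \bar R)
  (w p q : 'I_d -> R -> R) (a : 'I_d -> R)
  (phi : 'I_d -> nat -> R -> R) (lam : 'I_d -> nat -> R) :
  (1 <= d)%N ->
  (0 < c)%E ->
  (forall i, Ck_on 2 (Xint c) (w i)) ->
  (forall i x, Xint c x -> 0 < w i x) ->
  (forall i, Ck_on 2 (Xint c) (p i)) ->
  (forall i x, Xint c x -> p i x != 0) ->
  (forall i, Ck_on 1 (Xint c) (q i)) ->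
  (forall i, 0 <= a i) ->
  (forall i, ONB (Xint c) (w i) (phi i)) ->
  (forall i k, Cinf_on (Xint c) (phi i k)) ->
  (forall i k x, Xint c x ->
     a i * phi i k x
     + deltaS (w i) (p i) (q i) (delta (p i) (q i) (phi i k)) x
     = lam i k * phi i k x) ->
  (forall i k, lam i k < lam i k.+1) ->
  (forall i, lam i @ \oo --> +oo) ->
  (forall i k, L2w (Xint c) (w i) (delta (p i) (q i) (phi i k))) ->
  (forall i k m,
     ipw (Xint c) (w i) (delta (p i) (q i) (phi i k))
                        (delta (p i) (q i) (phi i m))
     = ipw (Xint c) (w i)
         (deltaS (w i) (p i) (q i) (delta (p i) (q i) (phi i k)))
         (phi i m)) ->
  (forall i, a i = lam i 0%N) ->
  forall (n : 'I_d -> nat) (x : 'I_d -> R), Xbold c x ->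
    Lbold w p q (\sum_(i < d) a i) (PhiN w p q a lam phi n) x
    = (\sum_(i < d) lam i (n i).+1./2) * PhiN w p q a lam phi n x.
Proof.
move=> _ _ Cw w_gt0 Cp _ Cq _ _ Cphi eig _ _ _ _ _ n x xX.
have dw i : forall y, Xint c y -> derivable (w i) y 1 := (Cw i).1 0%N isT.
have dp i : forall y, Xint c y -> derivable (p i) y 1 := (Cp i).1 0%N isT.
have dq i : forall y, Xint c y -> derivable (q i) y 1 := (Cq i).1 0%N isT.
have dphi i k : forall y, Xint c y -> derivable (phi i k) y 1 :=
  (Cphi i k 2%N).1 0%N isT.
have dphi' i k : forall y, Xint c y -> derivable (derive1 (phi i k)) y 1 :=
  (Cphi i k 2%N).1 1%N isT.
have w_neq0 i y : Xint c y -> w i y != 0 by move/w_gt0/lt0r_neq0.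
pose Phi := PhiN w p q a lam phi n.
have DjDj_Phi j : Dop w p q j (Dop w p q j Phi) x
    = - (lam j (n j).+1./2 - a j) * Phi x.
  pose H y :=
    \prod_(i < d | i != j) Phi1 (w i) (p i) (q i) (a i) (lam i) (phi i) (n i) (y i).
  have H_indep y u : H (fun i => if i == j then u else y i) = H y.
    by apply: eq_bigr => i /negbTE ->.
  have PhiE z : Phi z = H z * Phi1 (w j) (p j) (q j) (a j) (lam j) (phi j) (n j) (z j).
    by rewrite /Phi /PhiN (bigD1 j) //= mulrC.
  have [al [be Phi1E]] := Phi1_ladder (w j) (p j) (q j) (a j) (lam j) (n j) (dphi j _).
  have dPhi1 := derivable_ladder_form (dp j) (dq j) (dphi j _) (dphi' j _) Phi1E.
  have dDPhi1 := derivable_Dop1_ladder_form (dw j) (dp j) (dq j) (w_neq0 j)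
    (dphi j _) (dphi' j _) (eig j _) Phi1E (xX j).
  rewrite (Dop_sqr_tensor w p q H_indep (fun z _ => PhiE z) dPhi1 (xX j) dDPhi1).
  rewrite (Dop1_sqr_ladder_form (dw j) (dp j) (dq j) (w_neq0 j) (dphi j _)
    (dphi' j _) (eig j _) Phi1E (xX j)) PhiE.
  by ring.
rewrite /Lbold -/Phi (eq_bigr _ (fun j _ => DjDj_Phi j)) -mulr_suml sumrN sumrB.
by ring.
Qed.
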